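(* Let $(\omega_t)_{t\ge1}$ be any sequence of $(0,1)$-valued random variables with each $\omega_t$ $\mathcal{F}_{t-1}$-measurable, and define the e-LORD testing levels recursively by $\alpha_1=\alpha\omega_1$ and, for $t\ge2$, $$\alpha_t=\omega_t\Big(\alpha-\sum_{j=1}^{t-1}\frac{\alpha_j}{R_{j-1}+1}\Big)(R_{t-1}+1).$$ Then for all $t\ge1$, $\alpha_t=\alpha\,(R_{t-1}+1)\,\omega_t\prod_{j=1}^{t-1}(1-\omega_j)$, each $\alpha_t$ is positive and $\mathcal{F}_{t-1}$-measurable, and $\sum_{j=1}^t\frac{\alpha_j}{R_{j-1}+1}=\alpha\big(1-\prod_{j=1}^t(1-\omega_j)\big)\le\alpha$. Consequently, if the e-values are valid ($\mathbb{E}[e_t\mid\mathcal{F}_{t-1}]\le1$ a.s. whenever $\theta_t=0$), then $\mathrm{FDR}(t)\le\alpha$ for all $t\ge1$.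
   Context: Let $\alpha\in(0,1)$ be a target level. Hypotheses are indexed by $t=1,2,\dots$; $\theta_t\in\{0,1\}$ is a fixed (non-random) indicator with $\theta_t=0$ iff the $t$-th null hypothesis is true. $e_1,e_2,\dots$ are nonnegative random variables (e-values). The decisions are $\delta_t=\mathbb{1}\{e_t\ge 1/\alpha_t\}$. Let $\mathcal{F}_t=\sigma(\delta_1,\dots,\delta_t)$, $\mathcal{F}_0$ trivial. $R_t=\sum_{j=1}^t\delta_j$, $R_0=0$. $\mathcal{H}_0(t)=\{j\le t:\theta_j=0\}$. $\mathrm{FDR}(t)=\mathbb{E}\big[\sum_{j\in\mathcal{H}_0(t)}\delta_j/(R_t\vee 1)\big]$. *)

From HB Require Import structures.
From mathcomp Require Import all_boot all_order all_algebra.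
From mathcomp Require Import all_classical all_reals all_analysis.

Set Implicit Arguments.
Unset Strict Implicit.
Unset Printing Implicit Defensive.

Import Order.TTheory GRing.Theory Num.Theory.
Local Open Scope classical_set_scope.
Local Open Scope ring_scope.

Section ELord.
Context {T : Type} {R : realType}.

Definition Rcount (delta : nat -> T -> bool) (t : nat) (x : T) : nat :=
  (\sum_(1 <= j < t.+1) nat_of_bool (delta j x))%N.

(* number of false discoveries among the first t hypotheses;
   theta j = false  <->  theta_j = 0  <-> the j-th null is true *)
Definition Vcount (theta : nat -> bool) (delta : nat -> T -> bool)
    (t : nat) (x : T) : nat :=
  (\sum_(1 <= j < t.+1 | ~~ theta j) nat_of_bool (delta j x))%N.

Definition fdp (theta : nat -> bool) (delta : nat -> T -> bool)
    (t : nat) (x : T) : R :=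
  (Vcount theta delta t x)%:R / (maxn (Rcount delta t x) 1)%:R.

Definition Fgen (delta : nat -> T -> bool) (t : nat) : set (set T) :=
  [set A | exists j, (1 <= j <= t)%N /\ A = [set x | delta j x]].

Definition Fsig (delta : nat -> T -> bool) (t : nat) : set (set T) :=
  <<s Fgen delta t >>.

Definition F_measurable (F : set (set T)) (f : T -> R) : Prop :=
  forall B : set R, measurable B -> F (f @^-1` B).

End ELord.

From HB Require Import structures.
From mathcomp Require Import all_boot all_order all_algebra.
From mathcomp Require Import all_classical all_reals all_analysis.
From mathcomp Require Import ring zify measurable_realfun.
Import Order.TTheory GRing.Theory Num.Theory.
Local Open Scope classical_set_scope.
Local Open Scope ring_scope.

Set Implicit Arguments.
Unset Strict Implicit.
Unset Printing Implicit Defensive.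

(** With [W_j := alpha_j / (R_{j-1} + 1)] the recursion reads
    [W_t = omega_t (alpha - sum_{j<t} W_j)]: each step spends the fraction
    [omega_t] of the remaining wealth, which gives the closed forms and
    [sum_{j<=t} W_j = alpha (1 - prod_{j<=t} (1 - omega_j)) <= alpha].
    A rejection at [j <= t] means [alpha_j e_j >= 1] and forces
    [R_t >= R_{j-1} + 1], so [FDP(t) <= sum_{null j <= t} W_j e_j].  Since [W_j]
    is [F_{j-1}]-measurable with values in [[0,1]], validity of [e_j] yields
    [E[W_j e_j] <= E[W_j]] (approximate [W_j] from below by [F_{j-1}]-simple
    functions), hence [FDR(t) <= E[sum_j W_j] <= alpha]. *)

Section elord_recursion.
Variables (R : fieldType) (a : R) (omega alpha D : nat -> R).
Hypothesis alpha1 : alpha 1%N = a * omega 1%N.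
Hypothesis D0 : D 0%N = 1.
Hypothesis D_neq0 : forall t, D t != 0.
Hypothesis alphaS : forall t, (2 <= t)%N ->
  alpha t = omega t * (a - \sum_(1 <= j < t) alpha j / D j.-1) * D t.-1.

Lemma elord_alphaS t : (1 <= t)%N ->
  alpha t = omega t * (a - \sum_(1 <= j < t) alpha j / D j.-1) * D t.-1.
Proof.
case: t => // -[_|t _]; last exact: alphaS.
by rewrite big_geq // subr0 alpha1 D0 mulr1 mulrC.
Qed.

Lemma elord_spentE t :
  \sum_(1 <= j < t.+1) alpha j / D j.-1 = a * (1 - \prod_(1 <= j < t.+1) (1 - omega j)).
Proof.
elim: t => [|t IH]; first by rewrite !big_geq // subrr mulr0.
rewrite big_nat_recr //= [in RHS]big_nat_recr //= IH elord_alphaS //= IH.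
by rewrite -mulrA mulfV // mulr1; ring.
Qed.

Lemma elord_alphaE t : (1 <= t)%N ->
  alpha t = a * D t.-1 * omega t * \prod_(1 <= j < t) (1 - omega j).
Proof. by case: t => // t _; rewrite elord_alphaS //= elord_spentE; ring. Qed.

End elord_recursion.

Section filtration.
Variables (d : measure_display) (T : measurableType d) (R : realType).
Variable delta : nat -> T -> bool.

Lemma F_measurableP t (f : T -> R) : F_measurable (Fsig delta t) f <->
  measurable_fun [set: g_sigma_algebraType (Fgen delta t)] f.
Proof.
split => [fF _ B mB | mf B mB]; first by rewrite setTI; exact: fF.
by have := mf measurableT B mB; rewrite setTI.
Qed.

Lemma Fsig_le s t : (s <= t)%N -> Fsig delta s `<=` Fsig delta t.
Proof.
move=> st; apply: sub_sigma_algebra2 => _ [j [/andP[j1 js] ->]].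
by exists j; rewrite j1 (leq_trans js st).
Qed.

Lemma F_measurable_le s t (f : T -> R) : (s <= t)%N ->
  F_measurable (Fsig delta s) f -> F_measurable (Fsig delta t) f.
Proof. by move=> st fF B mB; apply: (Fsig_le st); exact: fF. Qed.

Lemma Fsig_setT t : Fsig delta t setT.
Proof. by rewrite -setC0; apply: sigma_algebraC; exact: sigma_algebra0. Qed.

Lemma Fsig_sub_measurable t :
  (forall j, (1 <= j <= t)%N -> measurable [set x | delta j x]) ->
  Fsig delta t `<=` measurable.
Proof.
move=> mdelta; apply: smallest_sub; first exact: sigma_algebra_measurable.
by move=> _ [j [jt ->]]; exact: mdelta.
Qed.

End filtration.

Lemma F_measurable_measurable d (T : measurableType d) (R : realType)
    (F : set (set T)) (f : T -> R) :
  F `<=` measurable -> F_measurable F f -> measurable_fun setT f.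
Proof. by move=> Fm fF _ B mB; rewrite setTI; apply: Fm; exact: fF. Qed.

Lemma measurable_count d (T : measurableType d) (b : nat -> T -> bool)
    (P : pred nat) t :
  (forall j, (1 <= j <= t)%N -> measurable [set x | b j x]) ->
  measurable_fun setT (fun x => \sum_(1 <= j < t.+1 | P j) nat_of_bool (b j x))%N.
Proof.
elim: t => [|t IH] mb.
  by under eq_fun do rewrite big_geq //; exact: measurable_cst.
under eq_fun do rewrite big_mkcond big_nat_recr //= -big_mkcond.
apply: measurable_fun_addn.
  by apply: IH => j /andP[j1 jt]; apply: mb; rewrite j1 ltnW.
case: (P t.+1) => /=; last exact: measurable_cst.
apply: (measurableT_comp (f := nat_of_bool)) => //.
by apply: (measurable_fun_bool true); rewrite setTI; apply: mb; rewrite leqnn.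
Qed.

Lemma F_measurable_comp_Rcount d (T : measurableType d) (R : realType)
    (delta : nat -> T -> bool) (h : nat -> R) t :
  F_measurable (Fsig delta t) (fun x => h (Rcount delta t x)).
Proof.
apply/F_measurableP; apply: (measurableT_comp (f := h)) => //.
apply: (@measurable_count _ (g_sigma_algebraType (Fgen delta t)) delta xpredT) => j jt.
by apply: sub_sigma_algebra; exists j.
Qed.

Lemma RcountS (T : Type) (delta : nat -> T -> bool) t x :
  Rcount delta t.+1 x = (Rcount delta t x + delta t.+1 x)%N.
Proof. by rewrite /Rcount big_nat_recr. Qed.

Lemma Rcount_le (T : Type) (delta : nat -> T -> bool) s t x : (s <= t)%N ->
  (Rcount delta s x <= Rcount delta t x)%N.
Proof.
by move=> st; rewrite /Rcount [X in (_ <= X)%N](big_cat_nat _ (n := s.+1)) ?leq_addr.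
Qed.

Lemma sum_natle_truncn (R : archiRealFieldType) (y : R) n : 0 <= y ->
  \sum_(1 <= k < n.+1) ((k%:R <= y :> R)%:R : R) = (minn n (Num.truncn y))%:R.
Proof.
move=> y0; elim: n => [|n IH]; first by rewrite big_geq // min0n.
rewrite big_nat_recr //= IH -truncn_ge_nat // -natrD; congr _%:R.
by have [h|h] := leqP n.+1 (Num.truncn y); rewrite ?h /=; lia.
Qed.

Lemma level_sum_approx (R : archiRealFieldType) (w : R) n : (0 < n)%N ->
  0 <= w <= 1 ->
  n%:R^-1 * \sum_(1 <= k < n.+1) ((k%:R <= n%:R * w :> R)%:R : R) <= w <=
  n%:R^-1 * \sum_(1 <= k < n.+1) ((k%:R <= n%:R * w :> R)%:R : R) + n%:R^-1.
Proof.
move=> n_gt0 /andP[w0 w1].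
have n0 : 0 < n%:R :> R by rewrite ltr0n.
have nw0 : 0 <= n%:R * w by rewrite mulr_ge0 // ltW.
have /andP[lo hi] := truncn_itv nw0.
have trunc_le_n : (Num.truncn (n%:R * w) <= n)%N.
  by rewrite truncn_le_nat (le_lt_trans (ler_piMr (ltW n0) w1)) // ltr_nat.
rewrite sum_natle_truncn // (minn_idPr trunc_le_n).
rewrite -[X in _ <= _ + X]mulr1 -mulrDr natr1.
by rewrite ler_pdivrMl // lo ler_pdivlMl // ltW.
Qed.

Lemma F_measurable_level_approx (T : Type) (R : realType) (F : set (set T))
    (w : T -> R) n : (0 < n)%N ->
  F_measurable F w -> (forall x, 0 <= w x <= 1) ->
  exists2 A : nat -> set T, (forall k, F (A k)) &
    forall x, n%:R^-1 * \sum_(1 <= k < n.+1) \1_(A k) x <= w x <=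
              n%:R^-1 * \sum_(1 <= k < n.+1) \1_(A k) x + n%:R^-1.
Proof.
move=> n_gt0 wF w01; have n0 : 0 < n%:R :> R by rewrite ltr0n.
exists (fun k => [set x | k%:R <= n%:R * w x]) => [k | x].
  rewrite (_ : [set x | _] = w @^-1` `[k%:R / n%:R, +oo[).
    by apply: wF; exact: measurable_itv.
  apply/funext => x; rewrite /preimage /= in_itv /= andbT.
  by rewrite ler_pdivrMr // mulrC.
suff -> : \sum_(1 <= k < n.+1) \1_([set x | k%:R <= n%:R * w x]) x =
          \sum_(1 <= k < n.+1) ((k%:R <= n%:R * w x :> R)%:R : R).
  exact: level_sum_approx.
apply: eq_bigr => k _; rewrite indicE.
by rewrite (_ : x \in _ = (k%:R <= n%:R * w x)) //; apply/idP/idP => [/set_mem | /mem_set].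
Qed.

Section integral_indic.
Variables (d : measure_display) (T : measurableType d) (R : realType).
Variable mu : {measure set T -> \bar R}.

Lemma integral_indic_mulr (A : set T) (g : T -> R) :
  (\int[mu]_x (\1_A x * g x)%:E = \int[mu]_(x in A) (g x)%:E)%E.
Proof.
rewrite [RHS]integral_mkcond; apply: eq_integral => x _.
by rewrite patchE indicE; case: (x \in A); rewrite ?mul1r ?mul0r.
Qed.

Lemma integral_indic_sum_mulr (A : nat -> set T) m (c : R) (g : T -> R) :
  (forall k, measurable (A k)) -> measurable_fun setT g ->
  (forall x, 0 <= g x) -> 0 <= c ->
  (\int[mu]_x ((c * \sum_(1 <= k < m) \1_(A k) x) * g x)%:E =
   \sum_(1 <= k < m) (c%:E * \int[mu]_(x in A k) (g x)%:E))%E.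
Proof.
move=> mA mg g0 c0.
have summand_ge0 k x : 0 <= \1_(A k) x * g x by rewrite mulr_ge0 // indicE.
under eq_integral => x _.
  rewrite -mulrA mulr_suml mulr_sumr -sumEFin.
  under eq_bigr do rewrite EFinM.
  over.
rewrite ge0_integral_sum //; last first.
- by move=> k x _; rewrite mule_ge0 // lee_fin.
- move=> k; apply/measurable_EFinP.
  by apply: measurable_funM; [exact: measurable_cst | exact: measurable_funM].
apply: eq_bigr => k _; rewrite ge0_integralZl_EFin //.
- by rewrite integral_indic_mulr.
- by move=> x _; rewrite lee_fin.
- by apply/measurable_EFinP; exact: measurable_funM.
Qed.

End integral_indic.

Section conditional_bound.
Variables (d : measure_display) (T : measurableType d) (R : realType).
Variables (P : probability T R) (F : set (set T)) (f : T -> R).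
Hypothesis F_sub : F `<=` measurable.
Hypothesis F_setT : F setT.
Hypothesis mf : measurable_fun setT f.
Hypothesis f_ge0 : forall x, 0 <= f x.
Hypothesis f_cond : forall A, F A -> (\int[P]_(x in A) (f x)%:E <= P A)%E.

Lemma integral_indic_sum_mul_le (A : nat -> set T) m (c : R) :
  (forall k, F (A k)) -> 0 <= c ->
  (\int[P]_x ((c * \sum_(1 <= k < m) \1_(A k) x) * f x)%:E <=
   \int[P]_x (c * \sum_(1 <= k < m) \1_(A k) x)%:E)%E.
Proof.
move=> FA c0; have mA k := F_sub (FA k).
under [X in (_ <= X)%E]eq_integral do rewrite -[X in X%:E]mulr1.
rewrite !integral_indic_sum_mulr //.
apply: lee_sum => k _; apply: lee_wpmul2l; first by rewrite lee_fin.
by rewrite integral_cst // mul1e; exact: f_cond.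
Qed.

Lemma integral_weight_mul_le_approx (w : T -> R) (A : nat -> set T) n :
  (forall k, F (A k)) -> measurable_fun setT w ->
  (forall x, n%:R^-1 * \sum_(1 <= k < n.+1) \1_(A k) x <= w x <=
             n%:R^-1 * \sum_(1 <= k < n.+1) \1_(A k) x + n%:R^-1) ->
  (\int[P]_x (w x * f x)%:E <= \int[P]_x (w x)%:E + (n%:R^-1)%:E)%E.
Proof.
move=> FA mw wn_approx; pose c : R := n%:R^-1.
have c_ge0 : 0 <= c by rewrite invr_ge0.
pose wn x := c * \sum_(1 <= k < n.+1) \1_(A k) x.
have wn_le_w x : wn x <= w x by case/andP: (wn_approx x).
have w_le_wn x : w x <= wn x + c by case/andP: (wn_approx x).
have wn_ge0 x : 0 <= wn x by rewrite mulr_ge0 // sumr_ge0 // => k _; rewrite indicE.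
have mwn : measurable_fun setT wn.
  apply: measurable_funM; first exact: measurable_cst.
  by apply: measurable_sum => k; exact/measurable_indic/F_sub.
have mcf : measurable_fun setT (fun x => c * f x).
  by apply: measurable_funM => //; exact: measurable_cst.
have mwnf : measurable_fun setT (fun x => wn x * f x) by exact: measurable_funM.
have split_le : (\int[P]_x (w x * f x)%:E <=
    \int[P]_x (wn x * f x)%:E + \int[P]_x (c * f x)%:E)%E.
  rewrite -ge0_integralD //; last 4 first.
  - by move=> x _; rewrite lee_fin mulr_ge0.
  - exact/measurable_EFinP.
  - by move=> x _; rewrite lee_fin mulr_ge0.
  - exact/measurable_EFinP.
  apply: ge0_le_integral => //.
  - by move=> x _; rewrite lee_fin mulr_ge0 // (le_trans (wn_ge0 x)).
  - by apply/measurable_EFinP; exact: measurable_funM.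
  - by apply: emeasurable_funD; exact/measurable_EFinP.
  - by move=> x _; rewrite -EFinD lee_fin -mulrDl ler_wpM2r.
have simple_le : (\int[P]_x (wn x * f x)%:E <= \int[P]_x (w x)%:E)%E.
  apply: le_trans (integral_indic_sum_mul_le _ FA c_ge0) _.
  apply: ge0_le_integral => //.
  - by move=> x _; rewrite lee_fin; exact: wn_ge0.
  - exact/measurable_EFinP.
  - exact/measurable_EFinP.
  - by move=> x _; rewrite lee_fin; exact: wn_le_w.
have rest_le : (\int[P]_x (c * f x)%:E <= c%:E)%E.
  have int_f_le1 : (\int[P]_x (f x)%:E <= 1)%E.
    by rewrite -(probability_setT P); exact: f_cond.
  under eq_integral do rewrite EFinM.
  rewrite ge0_integralZl_EFin //; last 2 first.
  - by move=> x _; rewrite lee_fin.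
  - exact/measurable_EFinP.
  by rewrite -[leRHS]mule1 lee_wpmul2l // lee_fin.
by apply: le_trans split_le _; exact: leeD.
Qed.

Lemma integral_weight_mul_le (w : T -> R) :
  F_measurable F w -> (forall x, 0 <= w x <= 1) ->
  (\int[P]_x (w x * f x)%:E <= \int[P]_x (w x)%:E)%E.
Proof.
move=> wF w01; apply/lee_addgt0Pr => eps eps_gt0.
pose n := (Num.truncn eps^-1).+1.
have [A FA w_approx] := F_measurable_level_approx (n := n) isT wF w01.
apply: le_trans (integral_weight_mul_le_approx FA _ w_approx) _.
  exact: F_measurable_measurable F_sub wF.
apply: leeD2l; rewrite lee_fin ltW // -(invrK eps) ltf_pV2 ?posrE ?invr_gt0 ?ltr0n //.
exact: truncnS_gt.
Qed.

End conditional_bound.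

Section elord.
Variables (d : measure_display) (T : measurableType d) (R : realType).
Variables (P : probability T R) (a : R) (theta : nat -> bool).
Variables (e omega alpha : nat -> T -> R) (delta : nat -> T -> bool).
Hypothesis a_gt0 : 0 < a.
Hypothesis a_le1 : a <= 1.
Hypothesis me : forall t, measurable_fun setT (e t).
Hypothesis e_ge0 : forall t x, 0 <= e t x.
Hypothesis omega01 : forall t x, 0 < omega t x < 1.
Hypothesis omegaF : forall t, (1 <= t)%N ->
  F_measurable (Fsig delta t.-1) (omega t).
Hypothesis delta_alpha : forall t x, (1 <= t)%N ->
  delta t x = ((alpha t x)^-1 <= e t x).
Hypothesis alpha1 : forall x, alpha 1%N x = a * omega 1%N x.
Hypothesis alphaS : forall t x, (2 <= t)%N ->
  alpha t x = omega t x
    * (a - \sum_(1 <= j < t) alpha j x / ((Rcount delta j.-1 x)%:R + 1))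
    * ((Rcount delta t.-1 x)%:R + 1).

Lemma Rcount1_gt0 t x : 0 < (Rcount delta t x)%:R + 1 :> R.
Proof. by rewrite natr1 ltr0n. Qed.

Lemma Rcount0 x : Rcount delta 0 x = 0%N.
Proof. by rewrite /Rcount big_geq. Qed.

Lemma alphaE t x : (1 <= t)%N ->
  alpha t x = a * ((Rcount delta t.-1 x)%:R + 1) * omega t x
                * \prod_(1 <= j < t) (1 - omega j x).
Proof.
apply: (elord_alphaE (omega := omega^~ x) (alpha := alpha^~ x)
                     (D := fun j => (Rcount delta j x)%:R + 1)) => //.
- by rewrite Rcount0 add0r.
- by move=> s; exact: alphaS.
Qed.

Lemma spent_wealthE t x :
  \sum_(1 <= j < t.+1) alpha j x / ((Rcount delta j.-1 x)%:R + 1)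
    = a * (1 - \prod_(1 <= j < t.+1) (1 - omega j x)).
Proof.
apply: (elord_spentE (omega := omega^~ x) (alpha := alpha^~ x)
                     (D := fun j => (Rcount delta j x)%:R + 1)) => //.
- by rewrite Rcount0 add0r.
- by move=> s; exact: alphaS.
Qed.

Lemma prod_one_sub_omega_itv t x :
  0 < \prod_(1 <= j < t) (1 - omega j x) <= 1.
Proof.
have omega_itv j : 0 < 1 - omega j x <= 1.
  by case/andP: (omega01 j x) => ? ?; rewrite subr_gt0 gerBl ltW ?andbT.
apply/andP; split; first by apply: prodr_gt0 => j _; case/andP: (omega_itv j).
by apply: prodr_ile1 => j _; case/andP: (omega_itv j) => /ltW -> ->.
Qed.

Lemma spent_wealth_le t x :
  \sum_(1 <= j < t.+1) alpha j x / ((Rcount delta j.-1 x)%:R + 1) <= a.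
Proof.
rewrite spent_wealthE -[leRHS]mulr1; apply: ler_wpM2l; first exact: ltW.
by rewrite gerBl; case/andP: (prod_one_sub_omega_itv t.+1 x) => /ltW.
Qed.

Lemma alpha_gt0 t x : (1 <= t)%N -> 0 < alpha t x.
Proof.
move=> t1; rewrite alphaE // !mulr_gt0 ?Rcount1_gt0 //.
- by case/andP: (omega01 t x).
- by case/andP: (prod_one_sub_omega_itv t x).
Qed.

Lemma omega_F_measurable_le j t : (1 <= j <= t)%N ->
  F_measurable (Fsig delta t.-1) (omega j).
Proof.
case/andP=> j1 jt; apply: F_measurable_le (omegaF j1).
by rewrite -!subn1 leq_sub2r.
Qed.

Lemma alpha_F_measurable t : (1 <= t)%N ->
  F_measurable (Fsig delta t.-1) (alpha t).
Proof.
move=> t1; rewrite (_ : alpha t = fun x => a * ((Rcount delta t.-1 x)%:R + 1)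
    * omega t x * \prod_(1 <= j < t) (1 - omega j x)); last first.
  by apply/funext => x; rewrite alphaE.
apply/F_measurableP; apply: measurable_funM; last first.
  apply: measurable_prod => j; rewrite mem_index_iota => /andP[j1 jt].
  apply: measurable_funB; first exact: measurable_cst.
  by apply/F_measurableP; apply: omega_F_measurable_le; rewrite j1 ltnW.
apply: measurable_funM; last by apply/F_measurableP; exact: omegaF.
apply: measurable_funM; first exact: measurable_cst.
by apply/F_measurableP; exact: (F_measurable_comp_Rcount (fun n : nat => n%:R + 1 : R)).
Qed.

(* The decisions are not assumed measurable: measurability propagates along
   the filtration because [alpha j] is [F_{j-1}]-measurable. *)
Lemma measurable_delta j : (1 <= j)%N -> measurable [set x | delta j x].
Proof.
elim/ltn_ind: j => j IH j1.
have Fsub : Fsig delta j.-1 `<=` measurable.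
  apply: Fsig_sub_measurable => i /andP[i1 ij]; apply: IH i1.
  by rewrite (leq_ltn_trans ij) // prednK.
have malpha := F_measurable_measurable Fsub (alpha_F_measurable j1).
rewrite (_ : [set x | _] = (fun x => alpha j x * e j x) @^-1` `[1, +oo[).
  by rewrite -[X in measurable X]setTI; apply: measurable_funM => //; exact: measurable_itv.
apply/funext => x; rewrite /preimage /= in_itv /= andbT delta_alpha //.
by rewrite -[(alpha j x)^-1]div1r ler_pdivrMr ?alpha_gt0 // mulrC.
Qed.

Lemma Fsig_measurable t : Fsig delta t `<=` measurable.
Proof. by apply: Fsig_sub_measurable => j /andP[j1 _]; exact: measurable_delta. Qed.

(* [alpha 0] is junk, so [weight 0] is set to [0]. *)
Definition weight j x : R :=
  if j is 0 then 0 else alpha j x / ((Rcount delta j.-1 x)%:R + 1).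

Lemma weightE j x : (1 <= j)%N ->
  weight j x = a * omega j x * \prod_(1 <= i < j) (1 - omega i x).
Proof.
case: j => // j _; rewrite /weight alphaE //=; field.
by rewrite gt_eqF // Rcount1_gt0.
Qed.

Lemma weight_itv j x : 0 <= weight j x <= 1.
Proof.
case: j => [|j]; first by rewrite lexx ler01.
rewrite weightE //; have /andP[omega0 omega1] := omega01 j.+1 x.
have /andP[prod0 prod1] := prod_one_sub_omega_itv j.+1 x.
apply/andP; split; first by rewrite !mulr_ge0 // ltW.
by rewrite !mulr_ile1 ?mulr_ge0 // ltW.
Qed.

Lemma weight_F_measurable j : F_measurable (Fsig delta j.-1) (weight j).
Proof.
case: j => [|j]; first by apply/F_measurableP; exact: measurable_cst.
apply/F_measurableP; apply: measurable_funM.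
  by apply/F_measurableP; exact: alpha_F_measurable.
by apply/F_measurableP; exact: (F_measurable_comp_Rcount (fun n : nat => (n%:R + 1)^-1 : R)).
Qed.

Lemma measurable_weight j : measurable_fun setT (weight j).
Proof. exact: F_measurable_measurable (@Fsig_measurable j.-1) (@weight_F_measurable j). Qed.

Lemma sum_weight_le t x : \sum_(1 <= j < t.+1) weight j x <= a.
Proof.
rewrite (eq_big_nat _ _ (F2 := fun j => alpha j x / ((Rcount delta j.-1 x)%:R + 1))).
  exact: spent_wealth_le.
by case=> [|j].
Qed.

Lemma rejection_le_weight j t x : (1 <= j <= t)%N ->
  (delta j x)%:R / (maxn (Rcount delta t x) 1)%:R <= weight j x * e j x.
Proof.
case: j => // j /= jt; case djx: (delta j.+1 x) => /=; last first.
  by rewrite mul0r mulr_ge0 //; case/andP: (weight_itv j.+1 x).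
have alpha_e_ge1 : 1 <= alpha j.+1 x * e j.+1 x.
  move: djx; rewrite delta_alpha // -[(alpha _ x)^-1]div1r.
  by rewrite ler_pdivrMr ?alpha_gt0 // mulrC.
have Rcount_le_max : (Rcount delta j x)%:R + 1 <= (maxn (Rcount delta t x) 1)%:R :> R.
  rewrite natr1 ler_nat (leq_trans _ (leq_maxl _ 1)) //.
  by have := RcountS delta j x; rewrite djx addn1 => <-; exact: Rcount_le.
apply: (@le_trans _ _ (((Rcount delta j x)%:R + 1)^-1)).
  by rewrite mul1r lef_pV2 ?posrE ?Rcount1_gt0 // (lt_le_trans (Rcount1_gt0 _ _)).
by rewrite /weight /= mulrAC -[leLHS]mul1r ler_wpM2r // invr_ge0 ltW ?Rcount1_gt0.
Qed.

Lemma fdp_le_sum_weight t x :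
  fdp (R := R) theta delta t x <= \sum_(1 <= j < t.+1 | ~~ theta j) weight j x * e j x.
Proof.
rewrite /fdp /Vcount natr_sum mulr_suml big_nat_cond [leRHS]big_nat_cond.
by apply: ler_sum => j /andP[/andP[j1 jt] _]; apply: rejection_le_weight; rewrite j1 -ltnS.
Qed.

Lemma measurable_fdp t : measurable_fun setT (fdp (R := R) theta delta t).
Proof.
have mdelta j : (1 <= j <= t)%N -> measurable [set x | delta j x].
  by case/andP=> j1 _; exact: measurable_delta.
apply: measurable_funM.
  apply: (measurableT_comp (f := fun n : nat => n%:R : R)) => //.
  exact: (measurable_count (fun j => ~~ theta j)).
apply: (measurableT_comp (f := fun n : nat => ((maxn n 1)%:R : R)^-1)) => //.
exact: (measurable_count xpredT).
Qed.

Hypothesis e_valid : forall t, (1 <= t)%N -> theta t = false ->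
  forall A, Fsig delta t.-1 A -> (\int[P]_(x in A) (e t x)%:E <= P A)%E.

Lemma integral_weight_mul_e_le j : (1 <= j)%N -> theta j = false ->
  (\int[P]_x (weight j x * e j x)%:E <= \int[P]_x (weight j x)%:E)%E.
Proof.
move=> j1 null; apply: (integral_weight_mul_le (F := Fsig delta j.-1)).
- exact: Fsig_measurable.
- exact: Fsig_setT.
- exact: me.
- exact: e_ge0.
- by move=> A; exact: e_valid.
- exact: weight_F_measurable.
- exact: weight_itv.
Qed.

Lemma FDR_le t : (\int[P]_x (fdp theta delta t x)%:E <= a%:E)%E.
Proof.
have w_ge0 j x : 0 <= weight j x by case/andP: (weight_itv j x).
have we_ge0 j x : 0 <= weight j x * e j x by rewrite mulr_ge0.
have mw j : measurable_fun setT (fun x => (weight j x)%:E).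
  by apply/measurable_EFinP; exact: measurable_weight.
have mwe j : measurable_fun setT (fun x => (weight j x * e j x)%:E).
  by apply/measurable_EFinP; apply: measurable_funM; [exact: measurable_weight | exact: me].
pose nulls := [seq j <- index_iota 1 t.+1 | ~~ theta j].
have fdp_le : (\int[P]_x (fdp theta delta t x)%:E <=
    \sum_(j <- nulls) \int[P]_x (weight j x * e j x)%:E)%E.
  rewrite -ge0_integral_sum //; last by move=> j x _; rewrite lee_fin.
  apply: ge0_le_integral => //.
  - by move=> x _; rewrite lee_fin /fdp divr_ge0.
  - exact/measurable_EFinP/measurable_fdp.
  - exact: emeasurable_sum.
  - by move=> x _; rewrite sumEFin lee_fin big_filter fdp_le_sum_weight.
have nulls_le : (\sum_(j <- nulls) \int[P]_x (weight j x * e j x)%:E <=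
    \sum_(1 <= j < t.+1) \int[P]_x (weight j x)%:E)%E.
  rewrite big_filter big_mkcond big_seq [leRHS]big_seq; apply: lee_sum => j.
  rewrite mem_index_iota => /andP[j1 _]; case: ifPn => [/negbTE null | _].
    exact: integral_weight_mul_e_le.
  by apply: integral_ge0 => x _; rewrite lee_fin.
apply: le_trans fdp_le (le_trans nulls_le _).
rewrite -ge0_integral_sum //; last by move=> j x _; rewrite lee_fin.
apply: (@le_trans _ _ (\int[P]_x (cst a%:E) x)%E).
  apply: ge0_le_integral => //.
  - by move=> x _; rewrite sume_ge0 // => j _; rewrite lee_fin.
  - exact: emeasurable_sum.
  - by move=> x _; rewrite sumEFin lee_fin sum_weight_le.
rewrite integral_cst // -[leRHS]mule1.
by apply: lee_wpmul2l; [rewrite lee_fin ltW | exact: probability_le1].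
Qed.

End elord.

Theorem mainTheorem11 (d : measure_display) (T : measurableType d)
    (R : realType) (P : probability T R)
    (a : R) (theta : nat -> bool)
    (e omega alpha : nat -> T -> R) (delta : nat -> T -> bool) :
  0 < a < 1 ->
  (forall t, measurable_fun setT (e t)) ->
  (forall t x, 0 <= e t x) ->
  (forall t, measurable_fun setT (omega t)) ->
  (forall t x, 0 < omega t x < 1) ->
  (forall t, (1 <= t)%N -> F_measurable (Fsig delta t.-1) (omega t)) ->
  (forall t x, (1 <= t)%N -> delta t x = ((alpha t x)^-1 <= e t x)) ->
  (forall x, alpha 1%N x = a * omega 1%N x) ->
  (forall t x, (2 <= t)%N ->
     alpha t x = omega t x
       * (a - \sum_(1 <= j < t) alpha j x / ((Rcount delta j.-1 x)%:R + 1))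
       * ((Rcount delta t.-1 x)%:R + 1)) ->
  [/\ (forall t x, (1 <= t)%N ->
         alpha t x = a * ((Rcount delta t.-1 x)%:R + 1) * omega t x
                       * \prod_(1 <= j < t) (1 - omega j x)),
      (forall t, (1 <= t)%N ->
         (forall x, 0 < alpha t x) /\ F_measurable (Fsig delta t.-1) (alpha t)),
      (forall t x, (1 <= t)%N ->
         \sum_(1 <= j < t.+1) alpha j x / ((Rcount delta j.-1 x)%:R + 1)
           = a * (1 - \prod_(1 <= j < t.+1) (1 - omega j x))
         /\ \sum_(1 <= j < t.+1) alpha j x / ((Rcount delta j.-1 x)%:R + 1)
           <= a)
    & ((forall t, (1 <= t)%N -> theta t = false ->
          forall A, Fsig delta t.-1 A ->
            (\int[P]_(x in A) (e t x)%:E <= P A)%E) ->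
       forall t, (1 <= t)%N ->
         (\int[P]_x (fdp theta delta t x)%:E <= a%:E)%E)].
Proof.
move=> /andP[a_gt0 /ltW a_le1] me e_ge0 _ omega01 omegaF delta_alpha alpha1 alphaS.
split.
- exact: alphaE alpha1 alphaS.
- move=> t t1; split.
    by move=> x; exact: alpha_gt0 a_gt0 omega01 alpha1 alphaS t x t1.
  exact: alpha_F_measurable omegaF alpha1 alphaS t t1.
- move=> t x _; split; first exact: spent_wealthE alpha1 alphaS t x.
  exact: spent_wealth_le a_gt0 omega01 alpha1 alphaS t x.
- move=> e_valid t _.
  exact: FDR_le a_gt0 a_le1 me e_ge0 omega01 omegaF delta_alpha alpha1 alphaS e_valid t.
Qed.
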